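(* Let $s\ge2$ and let $Q^*=\|q_{ik}\|$ ($i\in\{0,\dots,s-1\}$, $k\in\mathbb N$) define a $Q^*$-expansion of $[0,1]$ with $\inf_{i,k}q_{ik}>0$. Then the family $\varPhi$ of (interiors of) $Q^*$-cylinders is faithful for packing dimension calculation: $\dim_P(E,\varPhi)=\dim_{P(\mathit{unc})}(E)$ for every $E\subset[0,1]$.
   Context: A $Q^*$-expansion is a $\tilde Q$-expansion with $N_k=s$ for all $k$: $q_{ik}>0$, $\sum_iq_{ik}=1$, $\prod_k\max_iq_{ik}=0$, and $x=\sum_k\beta_{a_kk}\prod_{j<k}q_{a_jj}$ with $\beta_{ik}=\sum_{l<i}q_{lk}$; the rank-$n$ cylinder $\varDelta_{c_1\dots c_n}=\{x: a_j(x)=c_j,\ j\le n\}$ is an interval of length $\prod_{j\le n}q_{c_jj}$. In $\mathbb R$: an uncentered $\varepsilon$-packing of $E$ is a countable family of pairwise disjoint open intervals of length $\le\varepsilon$ each meeting $E$; $\mathcal P^\alpha_{\varepsilon(\mathit{unc})}(E)=\sup\sum|E_i|^\alpha$, $\mathcal P^\alpha_{0(\mathit{unc})}=\lim_{\varepsilon\to0}$, $\mathcal P^\alpha_{(\mathit{unc})}(E)=\inf\{\sum_j\mathcal P^\alpha_{0(\mathit{unc})}(E_j):E\subset\bigcup E_j\}$, $\dim_{P(\mathit{unc})}(E)=\inf\{\alpha:\mathcal P^\alpha_{(\mathit{unc})}(E)=0\}$; $\dim_P(E,\varPhi)$ is the same using only packings by intervals from $\varPhi$. *)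

From HB Require Import structures.
From mathcomp Require Import all_boot all_order all_algebra.
From mathcomp Require Import all_classical all_reals all_analysis.
Set Implicit Arguments. Unset Strict Implicit. Unset Printing Implicit Defensive.
Import Order.TTheory GRing.Theory Num.Theory.
Import numFieldNormedType.Exports.
Local Open Scope classical_set_scope.
Local Open Scope ring_scope.

Section Packing.
Variable R : realType.

Definition oitv (p : R * R) : set R := [set x | p.1 < x < p.2].

(* Phi = setT gives uncentered packings. *)
Definition is_packing (Phi : set (R * R)) (eps : R) (E : set R)
    (P : set (R * R)) : Prop :=
  (forall p, P p -> [/\ Phi p, p.1 < p.2, p.2 - p.1 <= eps & oitv p `&` E !=set0])
  /\ (forall p p', P p -> P p' -> p <> p' -> oitv p `&` oitv p' = set0).

Definition pack_eps (Phi : set (R * R)) (alpha eps : R) (E : set R) : \bar R :=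
  ereal_sup [set (\esum_(p in P) ((p.2 - p.1) `^ alpha)%:E)%E
            | P in [set P | is_packing Phi eps E P]].

(* P^alpha_0(E) = lim_{eps -> 0+} P^alpha_eps(E); since pack_eps is
   nondecreasing in eps this limit is the infimum over eps > 0. *)
Definition pack_0 (Phi : set (R * R)) (alpha : R) (E : set R) : \bar R :=
  ereal_inf [set pack_eps Phi alpha eps E | eps in [set eps : R | 0 < eps]].

Definition pack_measure (Phi : set (R * R)) (alpha : R) (E : set R) : \bar R :=
  ereal_inf [set (\sum_(j <oo) pack_0 Phi alpha (F j))%E
            | F in [set F : nat -> set R | E `<=` \bigcup_j F j]].

Definition dimP (Phi : set (R * R)) (E : set R) : \bar R :=
  ereal_inf [set alpha%:E | alpha in [set alpha : R | 0 <= alpha /\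
                                    pack_measure Phi alpha E = 0%E]].

Definition dimP_unc (E : set R) : \bar R := dimP setT E.

End Packing.

Section Qstar.
Variable R : realType.
(* q i k, digits i < s, positions k : nat (0-indexed) *)
Variable q : nat -> nat -> R.

Definition qbeta (i k : nat) : R := \sum_(l < i) q l k.

(* left endpoint and length of the rank-n cylinder Delta_{c_0 ... c_{n-1}} *)
Definition cyl_left (c : nat -> nat) (n : nat) : R :=
  \sum_(k < n) qbeta (c k) k * \prod_(j < k) q (c j) j.
Definition cyl_len (c : nat -> nat) (n : nat) : R :=
  \prod_(j < n) q (c j) j.

Definition Qcyl_family (s : nat) : set (R * R) :=
  [set p | exists (n : nat) (c : nat -> nat), (0 < n)%N /\
     (forall k, (c k < s)%N) /\
     p = (cyl_left c n, cyl_left c n + cyl_len c n)].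

Definition is_Qstar (s : nat) : Prop :=
  [/\ forall i k, (i < s)%N -> 0 < q i k,
      forall k, \sum_(i < s) q i k = 1 &
      (fun n => \prod_(k < n) \big[Num.max/0]_(i < s) q i k) @ \oo --> (0 : R)].
End Qstar.

(* Let x in E be no endpoint of a cylinder. An interval p of an uncentered
   packing that meets E at x can be traded for a cylinder J through x with
   delta |p| <= |J| <= |p|. Intervals whose cylinders have the same rank and lie
   on the same side of them have distinct, hence disjoint, cylinders, so each
   rank contributes at most twice a cylinder-packing sum. As a rank-n cylinder
   has length at most (1 - delta)^n, the bound
   |p|^b <= delta^-b eps^((b-a)/2) ((1 - delta)^((b-a)/2))^n |J|^a
   sums to a geometric series in n, and P^b_eps(E) <= C eps^((b-a)/2) P^a_eps(E, Phi).
   So P^a(E, Phi) = 0 forces P^b(E) = 0 for every b > a. The cylinder endpoints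
   form countably many finite sets, which carry no packing premeasure. *)

From HB Require Import structures.
From mathcomp Require Import all_boot all_order all_algebra.
From mathcomp Require Import all_classical all_reals all_analysis.
From mathcomp Require Import ring lra.
From mathcomp Require finmap.
Set Implicit Arguments. Unset Strict Implicit. Unset Printing Implicit Defensive.
Import Order.TTheory GRing.Theory Num.Theory.
Import numFieldNormedType.Exports.
Local Open Scope classical_set_scope.
Local Open Scope ring_scope.

Section esum_seq.
Variables (R : realType) (T : choiceType).
Implicit Types (A : set T) (f : T -> \bar R).

Lemma ge_esum A f B :
  (forall X : seq T, uniq X -> (forall x, x \in X -> A x) ->
     (\sum_(x <- X) f x <= B)%E) -> (\esum_(x in A) f x <= B)%E.
Proof.
move=> H; apply: ge_ereal_sup => _ [X [finX XA] <-].
rewrite fsbig_finite //; apply: H; first exact: finmap.fset_uniq.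
by move=> x; rewrite in_fset_set // inE; apply: XA.
Qed.

Lemma esum_ge_seq A f (X : seq T) :
  uniq X -> (forall x, x \in X -> A x) -> (\sum_(x <- X) f x <= \esum_(x in A) f x)%E.
Proof.
move=> uX XA; apply: ereal_sup_ubound; exists [set` X].
  by split; [apply/finite_seqP; exists X | move=> x /= /XA].
by rewrite -fsbig_seq.
Qed.

End esum_seq.

Section packing.
Variable R : realType.
Implicit Types (Phi : set (R * R)) (E : set R) (P : set (R * R)).

Lemma is_packingS Phi Phi' eps eps' E E' P : Phi `<=` Phi' -> eps <= eps' ->
  E `<=` E' -> is_packing Phi eps E P -> is_packing Phi' eps' E' P.
Proof.
move=> PhiPhi' epseps' EE' [Pitv Pdisj]; split => // p Pp.
have [Phip p12 peps [x [px Ex]]] := Pitv p Pp; split.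
- exact: PhiPhi'.
- exact: p12.
- exact: le_trans epseps'.
- by exists x; split => //; apply: EE'.
Qed.

Lemma le_pack_eps Phi Phi' a eps eps' E E' : Phi `<=` Phi' -> eps <= eps' ->
  E `<=` E' -> (pack_eps Phi a eps E <= pack_eps Phi' a eps' E')%E.
Proof.
move=> PhiPhi' epseps' EE'; apply: ge_ereal_sup => _ [P hP <-].
by apply: ereal_sup_ubound; exists P => //; apply: is_packingS hP.
Qed.

Lemma pack_eps_ge0 Phi a eps E : (0 <= pack_eps Phi a eps E)%E.
Proof. by apply: ereal_sup_ubound; exists set0; [split | exact: esum_set0]. Qed.

Lemma pack_0_ge0 Phi a E : (0 <= pack_0 Phi a E)%E.
Proof. by apply: le_ereal_inf_tmp => _ [eps _ <-]; exact: pack_eps_ge0. Qed.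

Lemma pack_0_le_pack_eps Phi a E eps : 0 < eps ->
  (pack_0 Phi a E <= pack_eps Phi a eps E)%E.
Proof. by move=> eps0; apply: ereal_inf_lbound; exists eps. Qed.

Lemma le_pack_0 Phi Phi' a E E' : Phi `<=` Phi' -> E `<=` E' ->
  (pack_0 Phi a E <= pack_0 Phi' a E')%E.
Proof.
move=> PhiPhi' EE'; apply: le_ereal_inf_tmp => _ [eps eps0 <-].
apply: le_trans (pack_0_le_pack_eps _ _ _ eps0) _.
exact: le_pack_eps.
Qed.

Lemma pack_0_eq0 Phi a E :
  (forall e, 0 < e -> exists2 eps, 0 < eps & (pack_eps Phi a eps E <= e%:E)%E) ->
  pack_0 Phi a E = 0%E.
Proof.
move=> small; apply/eqP; rewrite eq_le pack_0_ge0 andbT; apply/lee_addgt0Pr => e e0.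
have [eps eps0 le_e] := small e e0; rewrite add0e.
exact: le_trans (pack_0_le_pack_eps _ _ _ eps0) le_e.
Qed.

Lemma pack_measure_ge0 Phi a E : (0 <= pack_measure Phi a E)%E.
Proof.
apply: le_ereal_inf_tmp => _ [F _ <-]; apply: nneseries_ge0 => n _ _.
exact: pack_0_ge0.
Qed.

Lemma pack_measure_le_cover Phi a E (F : nat -> set R) : E `<=` \bigcup_j F j ->
  (pack_measure Phi a E <= \sum_(j <oo) pack_0 Phi a (F j))%E.
Proof. by move=> EF; apply: ereal_inf_lbound; exists F. Qed.

Lemma le_pack_measure Phi Phi' a E : Phi `<=` Phi' ->
  (pack_measure Phi a E <= pack_measure Phi' a E)%E.
Proof.
move=> PhiPhi'; apply: le_ereal_inf_tmp => _ [F EF <-].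
apply: le_trans (pack_measure_le_cover _ _ EF) _.
apply: lee_nneseries => [n _ _|n _]; first exact: pack_0_ge0.
exact: le_pack_0.
Qed.

Lemma ge_pack_eps Phi a eps E (B : R) :
  (forall P (X : seq (R * R)), is_packing Phi eps E P -> uniq X ->
     (forall p, p \in X -> P p) -> \sum_(p <- X) (p.2 - p.1) `^ a <= B) ->
  (pack_eps Phi a eps E <= B%:E)%E.
Proof.
move=> le_B; apply: ge_ereal_sup => _ [P hP <-]; apply: ge_esum => X uX XP.
by rewrite sumEFin lee_fin; apply: le_B hP uX XP.
Qed.

Lemma pack_eps_ge_seq Phi a eps E (u : seq (R * R)) :
  uniq u -> is_packing Phi eps E [set` u] ->
  ((\sum_(p <- u) (p.2 - p.1) `^ a)%:E <= pack_eps Phi a eps E)%E.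
Proof.
move=> uu hu; rewrite -sumEFin.
apply: le_trans (esum_ge_seq _ uu (fun p pu => pu)) _.
by apply: ereal_sup_ubound; exists [set` u].
Qed.

End packing.

Section finite_sets.
Variable R : realType.

Lemma exists_small_powR (K g e eps0 : R) : 0 < g -> 0 < e -> 0 < eps0 ->
  exists eps, [/\ 0 < eps, eps <= eps0 & K * eps `^ g <= e].
Proof.
move=> g0 e0 eps00.
have K1 : 0 < `|K| + 1 by rewrite ltr_pwDr.
set t := (e / (`|K| + 1)) `^ g^-1.
have t0 : 0 < t by apply: powR_gt0; rewrite divr_gt0.
have tg : t `^ g = e / (`|K| + 1).
  by rewrite /t -powRrM mulVf ?gt_eqF // powRr1 // divr_ge0 // ltW.
set eps := Num.min eps0 t.
have eps0' : 0 < eps by rewrite lt_min eps00 t0.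
exists eps; split => //; first by rewrite /eps ge_min lexx.
have epst : eps `^ g <= t `^ g.
  apply: ge0_ler_powR; rewrite ?nnegrE; try exact: ltW.
  by rewrite /eps ge_min lexx orbT.
apply: (le_trans (ler_wpM2r (powR_ge0 _ _) (ler_norm K))).
apply: (le_trans (ler_wpM2l (normr_ge0 K) epst)).
rewrite tg mulrCA ger_pMr // ler_pdivrMr // mul1r lerDl //.
Qed.

Lemma pack_eps_setT_seq (E : set R) (e : seq R) b eps : 0 <= b -> 0 < eps ->
  E `<=` [set` e] -> (pack_eps setT b eps E <= ((size e)%:R * eps `^ b)%:E)%E.
Proof.
move=> b0 eps0 Ee; apply: ge_pack_eps => P X [Pitv Pdisj] uX XP.
have /choice[pt ptP] : forall p, exists x, P p -> oitv p x /\ E x.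
  move=> p; have [Pp|] := pselect (P p); last by exists 0.
  by have [_ _ _ [x ?]] := Pitv p Pp; exists x.
have pt_inj : {in X &, injective pt}.
  move=> p p' pX p'X ptE; apply: contrapT => pp'.
  have [ptp _] := ptP p (XP p pX); have [ptp' _] := ptP p' (XP p' p'X).
  have := Pdisj p p' (XP p pX) (XP p' p'X) pp'.
  by move/seteqP => [/(_ (pt p)) + _]; apply; split; rewrite // ptE.
apply: (le_trans (y := \sum_(p <- X) eps `^ b)).
  rewrite big_seq [leRHS]big_seq; apply: ler_sum => p pX.
  have [_ p12 peps _] := Pitv p (XP p pX).
  by apply: ge0_ler_powR; rewrite ?nnegrE // ?subr_ge0 ltW.
rewrite big_const_seq count_predT iter_addr_0 -[leLHS]mulr_natl.
rewrite ler_wpM2r ?powR_ge0 // ler_nat -(size_map pt).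
apply: uniq_leq_size; first by rewrite map_inj_in_uniq.
by move=> y /mapP [p pX ->]; apply: Ee; have [_] := ptP p (XP p pX).
Qed.

Lemma pack_0_setT_finite (E : set R) b : 0 < b -> finite_set E ->
  pack_0 setT b E = 0%E.
Proof.
move=> b0 /finite_seqP [e ->]; apply: pack_0_eq0 => e' e'0.
have [eps [eps0 _ small]] := exists_small_powR (size e)%:R b0 e'0 ltr01.
exists eps => //.
apply: le_trans (pack_eps_setT_seq (ltW b0) eps0 (@subset_refl _ _)) _.
by rewrite lee_fin.
Qed.

End finite_sets.

Section real_inequalities.
Variable R : realType.

Lemma big_seq_partition (T : eqType) (X : seq T) (r : T -> nat) N (h : T -> R) :
  (forall p, p \in X -> (r p < N)%N) ->
  \sum_(p <- X) h p = \sum_(k < N) \sum_(p <- X | r p == k) h p.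
Proof.
move=> rN; under [RHS]eq_bigr do rewrite big_mkcond /=.
rewrite exchange_big /= big_seq [RHS]big_seq; apply: eq_bigr => p pX.
rewrite (bigD1 (Ordinal (rN p pX))) //= eqxx big1 ?addr0 // => k.
by rewrite -val_eqE /= eq_sym => /negbTE ->.
Qed.

Lemma sum_expr_le (rho : R) N : 0 <= rho < 1 ->
  \sum_(k < N) rho ^+ k <= (1 - rho)^-1.
Proof.
move=> /andP[rho0 rho1].
have rho_ne1 : rho - 1 != 0 by rewrite subr_eq0 lt_eqF.
have -> : \sum_(k < N) rho ^+ k = (1 - rho ^+ N) / (1 - rho).
  rewrite -[1 - rho ^+ N]opprB subrX1 -[1 - rho]opprB invrN mulrN mulNr opprK.
  by rewrite mulrAC mulfV // mul1r.
by rewrite -[leRHS]mul1r ler_pM2r ?invr_gt0 ?subr_gt0 // gerBl exprn_ge0.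
Qed.

Lemma sum_geometric_le (T : eqType) (X : seq T) (r : T -> nat) (f : T -> R) M rho :
  0 <= M -> 0 <= rho < 1 -> (forall k, \sum_(p <- X | r p == k) f p <= M) ->
  \sum_(p <- X) rho ^+ r p * f p <= M / (1 - rho).
Proof.
move=> M0 rho01 le_M; have [rho0 _] := andP rho01.
rewrite (@big_seq_partition _ X r (\max_(p <- X) r p).+1); last first.
  by move=> p pX; rewrite ltnS (leq_bigmax_seq _ pX).
apply: (le_trans (y := \sum_(k < _) rho ^+ k * M)).
  apply: ler_sum => k _.
  rewrite (eq_bigr (fun p => rho ^+ k * f p)) => [|p /eqP -> //].
  by rewrite -mulr_sumr ler_wpM2l ?exprn_ge0.
by rewrite -mulr_suml mulrC ler_wpM2l ?sum_expr_le.
Qed.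

Lemma powR_split_bound (d I L eps a b : R) n :
  0 < d -> 0 < L -> d * I <= L -> L <= eps -> L <= (1 - d) ^+ n -> d < 1 ->
  0 <= a -> a < b -> 0 < I ->
  I `^ b <= d^-1 `^ b * eps `^ ((b - a) / 2) * ((1 - d) `^ ((b - a) / 2)) ^+ n
     * L `^ a.
Proof.
move=> d0 L0 dI Le Ln d1 a0 ab I0.
set g := (b - a) / 2.
have g0 : 0 <= g by rewrite /g divr_ge0 // subr_ge0 ltW.
have b0 : 0 <= b by apply: le_trans a0 (ltW ab).
have Id : I <= L * d^-1 by rewrite ler_pdivlMr // mulrC.
have Ib : I `^ b <= (L * d^-1) `^ b.
  by apply: ge0_ler_powR; rewrite ?nnegrE ?mulr_ge0 ?invr_ge0; try exact: ltW.
apply: le_trans Ib _; rewrite powRM ?invr_ge0; try exact: ltW.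
set C := d^-1 `^ b.
have -> : b = a + g + g by rewrite /g; field.
rewrite !powRD ?(gt_eqF L0) /= ?implybT //.
have Leps : L `^ g <= eps `^ g.
  by apply: ge0_ler_powR; rewrite ?nnegrE //; lra.
have Lrho : L `^ g <= ((1 - d) `^ g) ^+ n.
  rewrite -powR_mulrn ?powR_ge0 // powRAC powR_mulrn; last by rewrite subr_ge0 ltW.
  by apply: ge0_ler_powR; rewrite ?nnegrE ?exprn_ge0 ?subr_ge0 //; lra.
rewrite -[in leRHS](mulrA _ (eps `^ g)).
rewrite [leLHS](_ : _ = C * (L `^ g * L `^ g) * L `^ a); last by ring.
by rewrite ler_wpM2r ?powR_ge0 // ler_wpM2l ?powR_ge0 // ler_pM ?powR_ge0.
Qed.

Lemma oitv_meet_left (p p' j : R * R) :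
  oitv p `&` oitv j !=set0 -> oitv p' `&` oitv j !=set0 ->
  p.1 <= j.1 -> p'.1 <= j.1 -> oitv p `&` oitv p' !=set0.
Proof.
rewrite /oitv => -[x [/= /andP[? ?] /andP[? ?]]] [x' [/= /andP[? ?] /andP[? ?]]] ? ?.
case: (lerP p.2 p'.2) => ?; [exists ((j.1 + p.2) / 2) | exists ((j.1 + p'.2) / 2)];
  by split; apply/andP; split => /=; lra.
Qed.

Lemma oitv_meet_right (p p' j : R * R) :
  oitv p `&` oitv j !=set0 -> oitv p' `&` oitv j !=set0 ->
  j.1 < p.1 -> j.1 < p'.1 -> j.2 - j.1 <= p.2 - p.1 -> j.2 - j.1 <= p'.2 - p'.1 ->
  oitv p `&` oitv p' !=set0.
Proof.
rewrite /oitv => -[x [/= /andP[? ?] /andP[? ?]]] [x' [/= /andP[? ?] /andP[? ?]]] ? ? ? ?.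
case: (lerP p.1 p'.1) => ?; [exists ((p'.1 + j.2) / 2) | exists ((p.1 + j.2) / 2)];
  by split; apply/andP; split => /=; lra.
Qed.

End real_inequalities.

Section cylinders.
Variables (R : realType) (q : nat -> nat -> R) (s : nat) (delta : R).
Hypothesis s_ge2 : (2 <= s)%N.
Hypothesis q_gt0 : forall i k, (i < s)%N -> 0 < q i k.
Hypothesis sum_q : forall k, \sum_(i < s) q i k = 1.
Hypothesis delta_gt0 : 0 < delta.
Hypothesis delta_le_q : forall i k, (i < s)%N -> delta <= q i k.

Definition is_digits (c : nat -> nat) := forall k, (c k < s)%N.

Definition cyl (c : nat -> nat) n : R * R :=
  (cyl_left q c n, cyl_left q c n + cyl_len q c n).

Lemma is_digits0 : is_digits (fun=> 0%N).
Proof. by move=> k; apply: leq_trans s_ge2. Qed.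

Lemma cyl_lenS c n : cyl_len q c n.+1 = cyl_len q c n * q (c n) n.
Proof. by rewrite /cyl_len big_ord_recr. Qed.

Lemma cyl_leftS c n :
  cyl_left q c n.+1 = cyl_left q c n + qbeta q (c n) n * cyl_len q c n.
Proof. by rewrite /cyl_left big_ord_recr. Qed.

Lemma cyl_len0 c : cyl_len q c 0 = 1.
Proof. by rewrite /cyl_len big_ord0. Qed.

Lemma cyl_left0 c : cyl_left q c 0 = 0.
Proof. by rewrite /cyl_left big_ord0. Qed.

Lemma eq_cyl_len c c' n : (forall k, (k < n)%N -> c k = c' k) ->
  cyl_len q c n = cyl_len q c' n.
Proof. by move=> cc'; apply: eq_bigr => i _; rewrite cc'. Qed.

Lemma eq_cyl_left c c' n : (forall k, (k < n)%N -> c k = c' k) ->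
  cyl_left q c n = cyl_left q c' n.
Proof.
move=> cc'; apply: eq_bigr => i _; rewrite cc' //; congr (_ * _).
by apply: eq_cyl_len => k kn; apply: cc'; apply: ltn_trans kn _.
Qed.

Lemma eq_cyl c c' n : (forall k, (k < n)%N -> c k = c' k) -> cyl c n = cyl c' n.
Proof. by move=> cc'; rewrite /cyl (eq_cyl_left cc') (eq_cyl_len cc'). Qed.

Lemma qbetaS i k : qbeta q i.+1 k = qbeta q i k + q i k.
Proof. by rewrite /qbeta big_ord_recr. Qed.

Lemma qbeta_ge0 i k : (i <= s)%N -> 0 <= qbeta q i k.
Proof.
move=> i_le_s; apply: sumr_ge0 => j _; apply/ltW/q_gt0.
exact: leq_trans (ltn_ord j) i_le_s.
Qed.

Lemma le_qbeta i j k : (i <= j)%N -> (j <= s)%N -> qbeta q i k <= qbeta q j k.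
Proof.
elim: j => [|j IH]; first by rewrite leqn0 => /eqP ->.
rewrite leq_eqVlt => /orP[/eqP -> //|ij] js.
by rewrite qbetaS; have := IH ij (ltnW js); have := q_gt0 k js; lra.
Qed.

Lemma cyl_len_gt0 c n : is_digits c -> 0 < cyl_len q c n.
Proof.
move=> dc; elim: n => [|n IH]; first by rewrite cyl_len0.
by rewrite cyl_lenS mulr_gt0 // q_gt0.
Qed.

Lemma q_le1Bdelta i k : (i < s)%N -> q i k <= 1 - delta.
Proof.
move=> i_lt_s; pose j := if i == 0%N then 1%N else 0%N.
have j_lt_s : (j < s)%N by rewrite /j; case: eqP => _; apply: leq_trans s_ge2.
have ji : Ordinal j_lt_s != Ordinal i_lt_s.
  by rewrite -val_eqE /= /j; case: (i =P 0%N) => [->|/eqP]; rewrite // eq_sym.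
have := sum_q k; rewrite (bigD1 (Ordinal i_lt_s)) // (bigD1 (Ordinal j_lt_s)) //=.
have : 0 <= \sum_(l < s | (l != Ordinal i_lt_s) && (l != Ordinal j_lt_s)) q l k.
  by apply: sumr_ge0 => l _; apply/ltW/q_gt0.
by have := delta_le_q k j_lt_s; lra.
Qed.

Lemma delta_lt1 : delta < 1.
Proof.
have s_gt0 : (0 < s)%N by apply: leq_trans s_ge2.
by have := q_le1Bdelta 0 s_gt0; have := q_gt0 0 s_gt0; lra.
Qed.

Lemma cyl_len_le c n : is_digits c -> cyl_len q c n <= (1 - delta) ^+ n.
Proof.
move=> dc; elim: n => [|n IH]; first by rewrite cyl_len0.
rewrite cyl_lenS exprSr ler_pM ?q_le1Bdelta //; last exact/ltW/q_gt0.
exact/ltW/cyl_len_gt0.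
Qed.

Lemma cyl_childE c n : cyl c n.+1 =
  (cyl_left q c n + qbeta q (c n) n * cyl_len q c n,
   cyl_left q c n + qbeta q (c n).+1 n * cyl_len q c n).
Proof. by rewrite /cyl cyl_leftS cyl_lenS qbetaS; congr pair; ring. Qed.

Lemma oitv_cylS c n x : is_digits c -> oitv (cyl c n.+1) x -> oitv (cyl c n) x.
Proof.
move=> dc; rewrite cyl_childE /oitv /= => /andP[lx xr].
have L0 := cyl_len_gt0 n dc.
have b0 := qbeta_ge0 n (ltnW (dc n)).
have b1 : qbeta q (c n).+1 n <= 1 by rewrite -(sum_q n); apply: le_qbeta.
by apply/andP; split; nra.
Qed.

Lemma eq_child_digit (l L x : R) i i' n : 0 < L -> (i < s)%N -> (i' < s)%N ->
  oitv (l + qbeta q i n * L, l + qbeta q i.+1 n * L) x ->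
  oitv (l + qbeta q i' n * L, l + qbeta q i'.+1 n * L) x -> i = i'.
Proof.
move=> L0 i_lt_s i'_lt_s; rewrite /oitv /= => /andP[? ?] /andP[? ?].
case: (ltngtP i i') => // [ii'|i'i]; exfalso.
- by have := le_qbeta n ii' (ltnW i'_lt_s); nra.
- by have := le_qbeta n i'i (ltnW i_lt_s); nra.
Qed.

Lemma eq_digits_of_oitv c c' n x : is_digits c -> is_digits c' ->
  oitv (cyl c n) x -> oitv (cyl c' n) x -> forall k, (k < n)%N -> c k = c' k.
Proof.
move=> dc dc'; elim: n => [//|n IH] xc xc' k.
have cc' := IH (oitv_cylS dc xc) (oitv_cylS dc' xc').
rewrite ltnS leq_eqVlt => /orP[/eqP ->|]; last exact: cc'.
move: xc xc'; rewrite !cyl_childE (eq_cyl_left cc') (eq_cyl_len cc').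
exact: eq_child_digit (cyl_len_gt0 n dc') (dc n) (dc' n).
Qed.

Lemma eq_cyl_of_oitv c c' n x : is_digits c -> is_digits c' ->
  oitv (cyl c n) x -> oitv (cyl c' n) x -> cyl c n = cyl c' n.
Proof. by move=> dc dc' xc xc'; apply/eq_cyl/(eq_digits_of_oitv dc dc' xc xc'). Qed.

Definition cyl_ends n : set R :=
  [set y | exists2 c, is_digits c & y = (cyl c n).1 \/ y = (cyl c n).2].

Definition cyl_end (x : R) := exists n, cyl_ends n x.

Lemma finite_cyl_ends n : finite_set (cyl_ends n).
Proof.
pose digits (f : {ffun 'I_n -> 'I_s}) k := oapp (fun i => val (f i)) 0%N (insub k).
apply: (@sub_finite_set _ _ ([set (cyl (digits f) n).1 | f in setT] `|`
                             [set (cyl (digits f) n).2 | f in setT])).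
  move=> y [c dc hy]; pose f := [ffun i : 'I_n => Ordinal (dc i)].
  have cf : forall k, (k < n)%N -> c k = digits f k.
    by move=> k kn; rewrite /digits insubT /= ffunE.
  by rewrite (eq_cyl cf) in hy; case: hy => ->; [left|right]; exists f.
by rewrite finite_setU; split; apply: finite_image; exact: finite_finset.
Qed.

Lemma oitv_cyl0 x : 0 <= x <= 1 -> ~ cyl_end x -> oitv (cyl (fun=> 0%N) 0) x.
Proof.
move=> /andP[x0 x1] xne; rewrite /oitv /cyl /= cyl_left0 cyl_len0 add0r.
rewrite !lt_neqAle x0 x1 !andbT.
apply/andP; split; apply/eqP => ex; apply: xne; exists 0%N, (fun=> 0%N).
- exact: is_digits0.
- by left; rewrite /cyl /= cyl_left0.
- exact: is_digits0.
- by right; rewrite /cyl /= cyl_left0 cyl_len0 add0r.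
Qed.

Lemma exists_child_cyl c n x : is_digits c -> ~ cyl_end x ->
  oitv (cyl c n) x -> exists2 c', is_digits c' & oitv (cyl c' n.+1) x.
Proof.
move=> dc xne xc.
have /andP[lx xr] : cyl_left q c n < x < cyl_left q c n + cyl_len q c n by [].
set l := cyl_left q c n in lx xr *; set L := cyl_len q c n in xr *.
have L0 : 0 < L by apply: cyl_len_gt0.
pose below j := (j < s)%N && (l + qbeta q j n * L < x).
have below0 : below 0%N.
  by rewrite /below (leq_trans _ s_ge2) //= /qbeta big_ord0 mul0r addr0.
have below_le_s j : below j -> (j <= s)%N by move=> /andP[/ltnW].
have [i /andP[i_lt_s li] i_max] := ex_maxnP (ex_intro below _ below0) below_le_s.
pose c' k := if k == n then i else c k.
have dc' : is_digits c' by move=> k; rewrite /c'; case: eqP.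
have cc' : forall k, (k < n)%N -> c k = c' k.
  by move=> k kn; rewrite /c' (ltn_eqF kn).
have c'E : cyl c' n.+1 = (l + qbeta q i n * L, l + qbeta q i.+1 n * L).
  by rewrite cyl_childE -(eq_cyl_left cc') -(eq_cyl_len cc') /c' eqxx.
exists c' => //; rewrite /oitv c'E /= li /= lt_neqAle; apply/andP; split.
  by apply/eqP => ex; apply: xne; exists n.+1, c' => //; right; rewrite c'E.
case: (ltnP i.+1 s) => [iS|].
  rewrite leNgt; apply/negP => xi.
  by have := i_max i.+1; rewrite /below iS xi ltnn => /(_ isT).
rewrite leq_eqVlt ltnNge i_lt_s orbF => /eqP <-.
by rewrite /qbeta sum_q mul1r ltW.
Qed.

Lemma exists_cyl (x : R) n : 0 <= x <= 1 -> ~ cyl_end x ->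
  exists2 c, is_digits c & oitv (cyl c n) x.
Proof.
move=> x01 xne; elim: n => [|n [c dc xc]]; last exact: exists_child_cyl xc.
by exists (fun=> 0%N); [exact: is_digits0 | exact: oitv_cyl0].
Qed.

Lemma cyl_len_ge_parent c c' n x : is_digits c -> is_digits c' ->
  oitv (cyl c n.+1) x -> oitv (cyl c' n) x -> delta * cyl_len q c' n <= cyl_len q c n.+1.
Proof.
move=> dc dc' xc xc'.
rewrite cyl_lenS (eq_cyl_len (eq_digits_of_oitv dc dc' (oitv_cylS dc xc) xc')).
by rewrite mulrC ler_wpM2l ?delta_le_q //; apply/ltW/cyl_len_gt0.
Qed.

Lemma exists_expr_lt (r : R) : 0 < r -> exists m, (1 - delta) ^+ m < r.
Proof.
move=> r0; have d1 := delta_lt1.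
have h : `|1 - delta| < 1 by rewrite ger0_norm ?subr_ge0 ?(ltW d1) // gtrBl.
have /cvgrPdist_lt/(_ r r0)[N _ HN] := cvg_expr h.
exists N; have := HN N (leqnn N); rewrite /= sub0r normrN.
exact: le_lt_trans (ler_norm _).
Qed.

Lemma exists_cyl_len (x r : R) : 0 <= x <= 1 -> ~ cyl_end x -> 0 < r <= 1 ->
  exists n c, [/\ (0 < n)%N, is_digits c, oitv (cyl c n) x &
     delta * r <= cyl_len q c n <= r].
Proof.
move=> x01 xne /andP[r0 r1].
set found := exists n c, _.
have descent k :
    found \/ exists2 c, is_digits c & oitv (cyl c k) x /\ r <= cyl_len q c k.
  elim: k => [|k IH].
    right; exists (fun=> 0%N); first exact: is_digits0.
    by split; [exact: oitv_cyl0 | rewrite cyl_len0].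
  case: IH => [?|[c dc [xc rc]]]; first by left.
  have [c' dc' xc'] := exists_cyl k.+1 x01 xne.
  have c'_ge := cyl_len_ge_parent dc' dc xc' xc.
  have [rc'|rc'] := lerP (cyl_len q c' k.+1) r; last first.
    by right; exists c' => //; split; last exact: ltW.
  left; exists k.+1, c'; split => //; rewrite rc' andbT.
  by apply: le_trans c'_ge; rewrite ler_wpM2l // ltW.
have [m mr] := exists_expr_lt r0.
case: (descent m) => // -[c dc [_ rc]].
by have := cyl_len_le m dc; lra.
Qed.

Lemma cyl_in_family c n : (0 < n)%N -> is_digits c -> Qcyl_family q s (cyl c n).
Proof. by move=> n0 dc; exists n, c. Qed.

Definition cyl_approx (F : set R) (p : R * R) (w : nat * (nat -> nat)) :=
  [/\ (0 < w.1)%N, is_digits w.2,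
      delta * (p.2 - p.1) <= cyl_len q w.2 w.1 <= p.2 - p.1 &
      exists x, [/\ F x, oitv p x & oitv (cyl w.2 w.1) x]].

Section comparison.
Variables (F : set R) (a eps m : R) (P : set (R * R)) (X : seq (R * R))
  (w : R * R -> nat * (nat -> nat)).
Hypothesis pack_eps_le_m : (pack_eps (Qcyl_family q s) a eps F <= m%:E)%E.
Hypothesis P_packing : is_packing setT eps F P.
Hypothesis uniq_X : uniq X.
Hypothesis X_sub_P : forall p, p \in X -> P p.
Hypothesis w_approx : forall p, p \in X -> cyl_approx F p (w p).

Local Notation rk p := (w p).1.
Local Notation J p := (cyl (w p).2 (w p).1).

Lemma cyl_approx_len p : (J p).2 - (J p).1 = cyl_len q (w p).2 (rk p).
Proof. by rewrite /cyl /= addrAC subrr add0r. Qed.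

Lemma rank_class_sum_le k (side : pred (R * R)) :
  {in X &, forall p p', side p -> side p' -> rk p = k -> rk p' = k ->
     J p = J p' -> p = p'} ->
  \sum_(p <- X | (rk p == k) && side p) cyl_len q (w p).2 (rk p) `^ a <= m.
Proof.
move=> J_inj; set Y := [seq p <- X | (rk p == k) && side p].
have uniq_JY : uniq [seq J p | p <- Y].
  rewrite map_inj_in_uniq ?filter_uniq // => p p'.
  rewrite !mem_filter => /andP[/andP[/eqP pk sp] pX] /andP[/andP[/eqP p'k sp'] p'X].
  exact: J_inj.
have JY_packing : is_packing (Qcyl_family q s) eps F [set` [seq J p | p <- Y]].
  split => [_ /mapP[p + ->]|_ _ /mapP[p + ->] /mapP[p' + ->] JJ'].
    rewrite mem_filter => /andP[_ pX].
    have [rk_gt0 dw /andP[_ Jp] [x [Fx _ xJ]]] := w_approx pX.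
    have [_ _ peps _] := P_packing.1 p (X_sub_P pX).
    split; [exact: cyl_in_family | | | by exists x].
      by rewrite /cyl /= ltrDl cyl_len_gt0.
    by rewrite cyl_approx_len (le_trans Jp peps).
  rewrite !mem_filter => /andP[/andP[/eqP pk _] pX] /andP[/andP[/eqP p'k _] p'X].
  apply/seteqP; split => // z [zJ zJ']; exfalso; apply: JJ'.
  have [_ dw _ _] := w_approx pX; have [_ dw' _ _] := w_approx p'X.
  by move: zJ zJ'; rewrite pk p'k; apply: eq_cyl_of_oitv.
have := pack_eps_ge_seq a uniq_JY JY_packing.
move=> /le_trans/(_ pack_eps_le_m); rewrite lee_fin big_map big_filter.
by under eq_bigr do rewrite cyl_approx_len.
Qed.

Lemma rank_sum_le k :
  \sum_(p <- X | rk p == k) cyl_len q (w p).2 (rk p) `^ a <= 2 * m.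
Proof.
have disj p p' : p \in X -> p' \in X -> oitv p `&` oitv p' !=set0 -> p = p'.
  move=> pX p'X meet; apply: contrapT => pp'; move: meet.
  by rewrite (P_packing.2 p p' (X_sub_P pX) (X_sub_P p'X) pp') => -[].
have meetJ p : p \in X -> oitv p `&` oitv (J p) !=set0.
  by move=> pX; have [_ _ _ [x [_ px xJ]]] := w_approx pX; exists x.
rewrite (bigID (fun p => p.1 <= (J p).1)) /= (_ : 2 * m = m + m); last by ring.
apply: lerD; apply: rank_class_sum_le => p p' pX p'X sp sp' _ _ JJ'; apply: disj => //.
  by apply: (oitv_meet_left (meetJ p pX) _ sp); rewrite JJ'; [exact: meetJ | exact: sp'].
have [_ _ /andP[_ Jp] _] := w_approx pX; have [_ _ /andP[_ Jp'] _] := w_approx p'X.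
move: sp sp'; rewrite /= -!ltNge => sp sp'.
apply: (oitv_meet_right (meetJ p pX) _ sp).
- by rewrite JJ'; apply: meetJ.
- by rewrite JJ'.
- by rewrite cyl_approx_len.
- by rewrite JJ' cyl_approx_len.
Qed.

Lemma approx_sum_le b : 0 <= a -> a < b -> 0 < eps ->
  \sum_(p <- X) (p.2 - p.1) `^ b <=
    delta^-1 `^ b * eps `^ ((b - a) / 2) * (2 * m) /
      (1 - (1 - delta) `^ ((b - a) / 2)).
Proof.
move=> a0 ab eps0; have d1 := delta_lt1.
have m0 : 0 <= m.
  by rewrite -lee_fin; apply: le_trans pack_eps_le_m; exact: pack_eps_ge0.
set g := (b - a) / 2; set rho := (1 - delta) `^ g; set K := delta^-1 `^ b * eps `^ g.
have g0 : 0 < g by rewrite divr_gt0 // subr_gt0.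
have rho01 : 0 <= rho < 1.
  have one_g : (1 : R) `^ g = 1 by rewrite powR1.
  rewrite powR_ge0 /rho -[X in _ < X]one_g.
  by apply: gt0_ltr_powR; rewrite ?nnegrE ?subr_ge0 ?ltW // gtrBl.
have K0 : 0 <= K by rewrite mulr_ge0 ?powR_ge0.
apply: (le_trans (y := \sum_(p <- X) rho ^+ rk p * (K * cyl_len q (w p).2 (rk p) `^ a))).
  rewrite big_seq [leRHS]big_seq; apply: ler_sum => p pX.
  have [_ dw /andP[dJ Jp] _] := w_approx pX.
  have [_ p12 peps _] := P_packing.1 p (X_sub_P pX).
  have p_gt0 : 0 < p.2 - p.1 by rewrite subr_gt0.
  apply: le_trans (powR_split_bound delta_gt0 (cyl_len_gt0 _ dw) dJ (le_trans Jp peps)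
    (cyl_len_le _ dw) d1 a0 ab p_gt0) _.
  by rewrite -/g -/rho /K le_eqVlt; apply/orP; left; apply/eqP; ring.
apply: sum_geometric_le => //; first by apply: mulr_ge0 => //; apply: mulr_ge0.
by move=> k; rewrite -mulr_sumr ler_wpM2l ?rank_sum_le.
Qed.

End comparison.

Lemma pack_eps_setT_le F a b eps m :
  (forall x, F x -> 0 <= x <= 1 /\ ~ cyl_end x) -> 0 <= a -> a < b -> 0 < eps <= 1 ->
  (pack_eps (Qcyl_family q s) a eps F <= m%:E)%E ->
  (pack_eps setT b eps F <=
    (delta^-1 `^ b * eps `^ ((b - a) / 2) * (2 * m) /
      (1 - (1 - delta) `^ ((b - a) / 2)))%:E)%E.
Proof.
move=> F01 a0 ab /andP[eps0 eps1] le_m.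
apply: ge_pack_eps => P X P_packing uX XP.
have /choice[w w_approx] : forall p, exists w, P p -> cyl_approx F p w.
  move=> p; have [Pp|] := pselect (P p); last by exists (0%N, fun=> 0%N).
  have [_ p12 peps [x [px Fx]]] := P_packing.1 p Pp.
  have [x01 xne] := F01 x Fx.
  have r01 : 0 < p.2 - p.1 <= 1 by rewrite subr_gt0 p12 (le_trans peps).
  have [n [c [n0 dc xc len_c]]] := exists_cyl_len x01 xne r01.
  by exists (n, c) => _; split => //; exists x.
exact: (approx_sum_le le_m P_packing uX XP (fun p pX => w_approx p (XP p pX))).
Qed.

Lemma pack_0_setT_eq0 F a b :
  (forall x, F x -> 0 <= x <= 1 /\ ~ cyl_end x) -> 0 <= a -> a < b ->
  (pack_0 (Qcyl_family q s) a F < +oo)%E -> pack_0 setT b F = 0%E.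
Proof.
move=> F01 a0 ab /ereal_inf_lt[_ [eps0 eps00 <-] fin_eps0].
set eps1 := Num.min eps0 1.
have eps10 : 0 < eps1 by rewrite lt_min eps00 ltr01.
have eps1_le : eps1 <= eps0 by rewrite ge_min lexx.
have le_eps1 :=
  le_pack_eps a (@subset_refl _ (Qcyl_family q s)) eps1_le (@subset_refl _ F).
have fin_eps1 : pack_eps (Qcyl_family q s) a eps1 F \is a fin_num.
  by rewrite ge0_fin_numE ?pack_eps_ge0 // (le_lt_trans le_eps1 fin_eps0).
set m := fine (pack_eps (Qcyl_family q s) a eps1 F).
have g0 : 0 < (b - a) / 2 by rewrite divr_gt0 // subr_gt0.
apply: pack_0_eq0 => e e0.
have [eps [eps0' eps_le small]] := exists_small_powR (delta^-1 `^ b * (2 * m) /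
   (1 - (1 - delta) `^ ((b - a) / 2))) g0 e0 eps10.
have eps01 : 0 < eps <= 1 by rewrite eps0' (le_trans eps_le) // ge_min lexx orbT.
have le_m : (pack_eps (Qcyl_family q s) a eps F <= m%:E)%E.
  by rewrite /m fineK //; apply: le_pack_eps.
exists eps => //; apply: le_trans (pack_eps_setT_le F01 a0 ab eps01 le_m) _.
by rewrite lee_fin (le_trans _ small) // le_eqVlt; apply/orP; left; apply/eqP; ring.
Qed.

Lemma pack_measure_setT_eq0 E a b : E `<=` `[0, 1] -> 0 <= a -> a < b ->
  pack_measure (Qcyl_family q s) a E = 0%E -> pack_measure setT b E = 0%E.
Proof.
move=> E01 a0 ab PhiE0.
have /ereal_inf_lt[_ [F EF <-] sumF_lt1] :
  (pack_measure (Qcyl_family q s) a E < 1%:E)%E by rewrite PhiE0 lte_fin ltr01.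
have fin_F j : (pack_0 (Qcyl_family q s) a (F j) < +oo)%E.
  apply: le_lt_trans (lt_trans sumF_lt1 (ltry 1)).
  apply: le_trans (nneseries_lim_ge (m := 0%N) (P := xpredT) j.+1 _); last first.
    by move=> n _ _; exact: pack_0_ge0.
  by rewrite big_nat_recr //= leeDr // sume_ge0 // => n _; exact: pack_0_ge0.
(* Odd indices cover the non-endpoints in each F j, even ones the endpoints rank
   by rank. *)
pose G k := if odd k then (F k./2 `&` `[0, 1]) `\` cyl_end else E `&` cyl_ends k./2.
apply/eqP; rewrite eq_le pack_measure_ge0 andbT.
apply: le_trans (pack_measure_le_cover setT b (F := G) _) _.
  move=> x Ex; have [[n xn]|xne] := pselect (cyl_end x).
    by exists n.*2 => //; rewrite /G odd_double half_double.
  have [j _ Fjx] := EF x Ex.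
  exists j.*2.+1 => //; rewrite /G /= odd_double uphalf_double.
  by split => //; split => //; apply: E01.
rewrite eseries0 // => k _ _; rewrite /G; case: ifP => _.
  apply: (pack_0_setT_eq0 _ a0 ab).
    by move=> x [[_ x01] xne]; split => //; rewrite in_itv /= in x01.
  by apply: le_lt_trans (fin_F k./2); apply: le_pack_0 => // x [[]].
apply: pack_0_setT_finite (le_lt_trans a0 ab) _.
exact/finite_setIr/finite_cyl_ends.
Qed.

Lemma dimP_Qcyl_family E : E `<=` `[0, 1] -> dimP (Qcyl_family q s) E = dimP setT E.
Proof.
move=> E01; apply/eqP; rewrite eq_le; apply/andP; split.
  apply: ereal_inf_le_tmp => _ [a [a0 Ea0] <-]; exists a => //; split => //.
  by apply/eqP; rewrite eq_le pack_measure_ge0 andbT -Ea0 le_pack_measure.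
apply: le_ereal_inf_tmp => _ [a [a0 Ea0] <-]; apply/lee_addgt0Pr => e e0.
apply: ereal_inf_lbound; exists (a + e); last by rewrite EFinD.
split; first by rewrite addr_ge0 // ltW.
by apply: (pack_measure_setT_eq0 E01 a0) => //; rewrite ltrDl.
Qed.

End cylinders.

Unset Implicit Arguments.

Theorem corollary2 (R : realType) (s : nat) (q : nat -> nat -> R) :
  (2 <= s)%N ->
  is_Qstar q s ->
  (exists2 delta : R, 0 < delta & forall i k, (i < s)%N -> delta <= q i k) ->
  forall E : set R, E `<=` `[0, 1] ->
    dimP (Qcyl_family q s) E = dimP_unc E.
Proof.
(* The shrinking of cylinders required of a Q*-matrix follows from the lower
   bound delta (see cyl_len_le). *)
move=> s_ge2 [q_gt0 sum_q _] [delta delta_gt0 delta_le_q] E E01.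
rewrite /dimP_unc.
exact: dimP_Qcyl_family s_ge2 q_gt0 sum_q delta_gt0 delta_le_q E E01.
Qed.
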